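(* Assume the cost function $\mathbf{c}$ satisfies the Principle of Near-Optimality (PONO). Let $Q$ be a finite nonempty set of tables, let $\alpha_i\ge 1$, and run the Representative-Tradeoffs dynamic program (RTA) with internal precision $\alpha_i$, producing sets $\mathcal{P}^q\subseteq \mathcal{A}(q)$ for all nonempty $q\subseteq Q$ (the order in which splits, operators and sub-plans are enumerated is arbitrary). Then for every nonempty $q\subseteq Q$ and every plan $p^*\in\mathcal{A}(q)$ there exists $p\in\mathcal{P}^q$ with $\mathbf{c}(p)\preceq_{\alpha_i^{|q|}}\mathbf{c}(p^* )$. In particular $\mathcal{P}^Q$ is an $\alpha_i^{|Q|}$-approximate Pareto set for $Q$.
   Context: Fix a finite set $\mathbb{O}$ of $l\ge1$ objectives and a finite set $\mathbb{J}$ of join operators. For each table $t$ there is a finite nonempty set $\mathcal{A}(\{t\})$ of scan plans (access paths). For a set $q$ of tables with $|q|\ge2$, the plan space $\mathcal{A}(q)$ consists of all plans $\mathrm{Combine}(j,p_1,p_2)$ where $q=q_1\dot\cup q_2$ with $q_1,q_2$ nonempty, $j\in\mathbb{J}$, $p_1\in\mathcal{A}(q_1)$, $p_2\in\mathcal{A}(q_2)$; $p_1,p_2$ are the sub-plans. Each plan $p$ has a cost vector $\mathbf{c}(p)\in\mathbb{R}_{\ge0}^{\mathbb{O}}$. For vectors, $\mathbf{c}_1\preceq\mathbf{c}_2$ means $\mathbf{c}_1^o\le\mathbf{c}_2^o$ for all $o\in\mathbb{O}$, and $\mathbf{c}_1\preceq_\alpha\mathbf{c}_2$ means $\mathbf{c}_1^o\le\alpha\,\mathbf{c}_2^o$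 for all $o$. PONO: for all $\alpha\ge1$, $j\in\mathbb{J}$ and plans with $\mathbf{c}(p_L^* )\preceq_\alpha\mathbf{c}(p_L)$, $\mathbf{c}(p_R^* )\preceq_\alpha\mathbf{c}(p_R)$ (where $p_L,p_L^*$ produce the same table set, as do $p_R,p_R^*$), one has $\mathbf{c}(\mathrm{Combine}(j,p_L^*,p_R^* ))\preceq_\alpha\mathbf{c}(\mathrm{Combine}(j,p_L,p_R))$. Procedure $\mathrm{Prune}(\mathcal{P},p_N,\alpha_i)$: if there is no $p\in\mathcal{P}$ with $\mathbf{c}(p)\preceq_{\alpha_i}\mathbf{c}(p_N)$, then delete from $\mathcal{P}$ every $p$ with $\mathbf{c}(p_N)\preceq\mathbf{c}(p)$ and then insert $p_N$; otherwise $\mathcal{P}$ is unchanged. RTA: for each table $t\in Q$, start with $\mathcal{P}^{\{t\}}=\emptyset$ and call $\mathrm{Prune}(\mathcal{P}^{\{t\}},p_N,\alpha_i)$ for every $p_N\in\mathcal{A}(\{t\})$; then for $k=2,\dots,|Q|$ and every $q\subseteq Q$ with $|q|=k$, start with $\mathcal{P}^q=\emptyset$ and, for every split $q=q_1\dot\cup q_2$ into nonempty parts, every $p_1\in\mathcal{P}^{q_1}$, $p_2\in\mathcal{P}^{q_2}$, $j\in\mathbb{J}$, call $\mathrm{Prune}(\mathcal{P}^q,\mathrm{Combine}(j,p_1,p_2),\alpha_i)$. An $\alpha$-approximate Pareto set for $q$ is a set of plans for $q$ containing, for every plan $p^*\in\mathcal{A}(q)$ (equivalently every Pareto-optimal one),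 a plan $p$ with $\mathbf{c}(p)\preceq_\alpha\mathbf{c}(p^* )$. *)

From HB Require Import structures.
From mathcomp Require Import all_boot all_order all_algebra.
Set Implicit Arguments. Unset Strict Implicit. Unset Printing Implicit Defensive.
Import Order.TTheory GRing.Theory Num.Theory.

(* Query plans: T = tables, J = join operators, S = access paths (scan kinds). *)
Inductive plan (T J S : Type) : Type :=
| Scan of T & S
| Combine of J & plan T J S & plan T J S.
Arguments Scan {T J S}.
Arguments Combine {T J S}.

Section PlanEq.
Variables (T J S : eqType).
Fixpoint plan_eqb (p q : plan T J S) : bool :=
  match p, q with
  | Scan t a, Scan t' a' => (t == t') && (a == a')
  | Combine j p1 p2, Combine j' q1 q2 =>
      [&& j == j', plan_eqb p1 q1 & plan_eqb p2 q2]
  | _, _ => false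
  end.
Lemma plan_eqP : Equality.axiom plan_eqb.
Proof.
elim=> [t a|j p1 IH1 p2 IH2] [t' a'|j' q1 q2] /=; try by constructor.
- by apply: (iffP andP) => [[/eqP-> /eqP->]|[-> ->]].
- apply: (iffP and3P) => [[/eqP-> /IH1-> /IH2->]|[-> <- <-]] //.
  by split=> //; [apply/IH1|apply/IH2].
Qed.
HB.instance Definition _ := hasDecEq.Build (plan T J S) plan_eqP.
End PlanEq.

Section Plans.
Variables (T : finType) (J : finType) (S : eqType).

Fixpoint tables (p : plan T J S) : {set T} :=
  match p with
  | Scan t _ => [set t]
  | Combine _ p1 p2 => tables p1 :|: tables p2
  end.

(* well-formedness: scans use admissible access paths, joins combine
   plans on disjoint table sets (which are automatically nonempty). *)
Fixpoint valid (scans : T -> seq S) (p : plan T J S) : bool :=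
  match p with
  | Scan t a => a \in scans t
  | Combine _ p1 p2 =>
      [&& valid scans p1, valid scans p2 & [disjoint tables p1 & tables p2]]
  end.

Definition inA (scans : T -> seq S) (q : {set T}) (p : plan T J S) : bool :=
  valid scans p && (tables p == q).
End Plans.

Section Costs.
Variables (R : realFieldType) (O : finType).
Local Open Scope ring_scope.

Definition dom (c1 c2 : O -> R) : bool := [forall o, c1 o <= c2 o].
Definition adom (alpha : R) (c1 c2 : O -> R) : bool :=
  [forall o, c1 o <= alpha * c2 o].

Variables (T J : finType) (S : eqType).
Variable (c : plan T J S -> O -> R).

Definition PONO (scans : T -> seq S) : Prop :=
  forall (alpha : R) (j : J) (pL pLs pR pRs : plan T J S),
    1 <= alpha ->
    valid scans pL -> valid scans pLs -> valid scans pR -> valid scans pRs ->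
    [disjoint tables pL & tables pR] ->
    tables pLs = tables pL -> tables pRs = tables pR ->
    adom alpha (c pLs) (c pL) -> adom alpha (c pRs) (c pR) ->
    adom alpha (c (Combine j pLs pRs)) (c (Combine j pL pR)).

Definition prune (alpha : R) (P : seq (plan T J S)) (pN : plan T J S)
  : seq (plan T J S) :=
  if has (fun p => adom alpha (c p) (c pN)) P then P
  else pN :: filter (fun p => ~~ dom (c pN) (c p)) P.

Definition candidates (P : {set T} -> seq (plan T J S)) (q : {set T})
  : seq (plan T J S) :=
  flatten [seq flatten [seq [seq Combine j p1 p2 | p2 <- P (q :\: q1), j <- enum J]
                       | p1 <- P q1]
          | q1 <- enum [set q1 in powerset q | (q1 != set0) && (q1 != q)]].

(* P is the output of RTA on Q with internal precision alpha, for some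
   arbitrary enumeration order of the candidates at each table set. *)
Definition RTA_output (scans : T -> seq S) (alpha : R) (Q : {set T})
  (P : {set T} -> seq (plan T J S)) : Prop :=
  (forall t, t \in Q -> exists2 s,
       perm_eq s [seq Scan t a | a <- scans t] &
       P [set t] = foldl (prune alpha) [::] s) /\
  (forall q : {set T}, q \subset Q -> (2 <= #|q|)%N -> exists2 s,
       perm_eq s (candidates P q) &
       P q = foldl (prune alpha) [::] s).

Definition approx_pareto (scans : T -> seq S) (alpha : R) (q : {set T})
  (P : seq (plan T J S)) : Prop :=
  all (inA scans q) P /\
  forall ps, inA scans q ps -> exists2 p, p \in P & adom alpha (c p) (c ps).
End Costs.

(** A scan is itself enumerated when its singleton
    is pruned, and pruning with precision [alpha] only discards a candidate
    that is [alpha]-dominated by a kept plan, or a kept plan that is dominated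
    by the newcomer. For [p* = Combine j pL pR] the induction hypothesis
    provides representatives of [pL] and [pR] within [alpha^(|q|-1)]; by PONO
    their combination, which is one of the candidates for [q], is within
    [alpha^(|q|-1)] of [p*], and pruning loses one more factor [alpha]. *)

From HB Require Import structures.
From mathcomp Require Import all_boot all_order all_algebra.
Set Implicit Arguments. Unset Strict Implicit. Unset Printing Implicit Defensive.
Import Order.TTheory GRing.Theory Num.Theory.
Local Open Scope ring_scope.

Lemma leq_addn_pred m n : (0 < n)%N -> (m <= (m + n).-1)%N.
Proof. by case: n => // n _; rewrite addnS leq_addr. Qed.

Section Dominance.
Variables (R : realFieldType) (O : finType).
Implicit Types (a b : R) (x y z : O -> R).

Lemma adom_refl a x : 1 <= a -> (forall o, 0 <= x o) -> adom a x x.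
Proof.
move=> a_ge1 x_ge0; apply/forallP=> o.
by rewrite -{1}(mul1r (x o)) ler_wpM2r.
Qed.

Lemma dom_adom_trans a x y z : dom x y -> adom a y z -> adom a x z.
Proof.
by move=> /forallP xy /forallP yz; apply/forallP=> o; apply: le_trans (xy o) (yz o).
Qed.

Lemma adom_trans a b x y z :
  0 <= a -> adom a x y -> adom b y z -> adom (a * b) x z.
Proof.
move=> a_ge0 /forallP xy /forallP yz; apply/forallP=> o.
by apply: le_trans (xy o) _; rewrite -mulrA ler_wpM2l.
Qed.

Lemma adom_le a b x z :
  a <= b -> (forall o, 0 <= z o) -> adom a x z -> adom b x z.
Proof.
move=> ab z_ge0 /forallP xz; apply/forallP=> o.
by apply: le_trans (xz o) _; rewrite ler_wpM2r.
Qed.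

Lemma adom_expn_le a m n x z : 1 <= a -> (m <= n)%N ->
  (forall o, 0 <= z o) -> adom (a ^+ m) x z -> adom (a ^+ n) x z.
Proof. by move=> a_ge1 mn; apply: adom_le; rewrite ler_weXn2l. Qed.

End Dominance.

Section Pruning.
Variables (R : realFieldType) (O T J : finType) (S : eqType).
Variable c : plan T J S -> O -> R.

Definition covers (a : R) (P : seq (plan T J S)) (x : plan T J S) :=
  exists2 p, p \in P & adom a (c p) (c x).

Hypothesis c_ge0 : forall p o, 0 <= c p o.
Variables (a : R) (P : seq (plan T J S)).
Hypothesis a_ge1 : 1 <= a.
Implicit Types (x pN : plan T J S).

Lemma mem_prune pN : {subset prune c a P pN <= pN :: P}.
Proof.
rewrite /prune => x; case: ifP => _ xP; first by rewrite inE xP orbT.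
by move: xP; rewrite !inE mem_filter => /orP[->|/andP[_ ->]]; rewrite ?orbT.
Qed.

Lemma covers_prune pN x : covers a P x -> covers a (prune c a P pN) x.
Proof.
case=> p pP px; rewrite /prune; case: ifP => _; first by exists p.
have [pN_p | pN_not_p] := boolP (dom (c pN) (c p)).
  by exists pN; [rewrite inE eqxx | apply: dom_adom_trans pN_p px].
by exists p; rewrite // inE mem_filter pN_not_p pP orbT.
Qed.

Lemma covers_prune_new pN : covers a (prune c a P pN) pN.
Proof.
rewrite /prune; case: ifP => [/hasP[p pP ppN] | _]; first by exists p.
by exists pN; [rewrite inE eqxx | apply: adom_refl].
Qed.

End Pruning.

Section PruneFold.
Variables (R : realFieldType) (O T J : finType) (S : eqType).
Variable c : plan T J S -> O -> R.
Hypothesis c_ge0 : forall p o, 0 <= c p o.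
Variable a : R.
Hypothesis a_ge1 : 1 <= a.
Implicit Types (x : plan T J S) (P s : seq (plan T J S)).

Lemma mem_foldl_prune P s : {subset foldl (prune c a) P s <= P ++ s}.
Proof.
elim: s P => [|y s IHs] P x /=; first by rewrite cats0.
move=> /IHs; rewrite !mem_cat inE => /orP[/mem_prune|->]; last by rewrite !orbT.
by rewrite inE => /orP[->|->]; rewrite ?orbT.
Qed.

Lemma covers_foldl_prune P s x :
  covers c a P x -> covers c a (foldl (prune c a) P s) x.
Proof. by elim: s P => //= y s IHs P xP; apply/IHs/covers_prune. Qed.

Lemma covers_foldl_prune_mem P s x :
  x \in s -> covers c a (foldl (prune c a) P s) x.
Proof.
elim: s P => //= y s IHs P; rewrite inE => /orP[/eqP-> | xs]; last exact: IHs.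
by apply/covers_foldl_prune/covers_prune_new.
Qed.

End PruneFold.

Section Candidates.
Variables (T J : finType) (S : eqType).
Implicit Types (P : {set T} -> seq (plan T J S)) (A B q : {set T}).

Lemma tables_neq0 (p : plan T J S) : tables p != set0.
Proof.
elim: p => [t s | j p1 IH1 p2 _] /=; first by apply/set0Pn; exists t; rewrite inE.
by case/set0Pn: IH1 => x xp1; apply/set0Pn; exists x; rewrite inE xp1.
Qed.

Lemma cards_disjointU A B : [disjoint A & B] -> #|A :|: B| = (#|A| + #|B|)%N.
Proof. by move=> dAB; apply/eqP; rewrite (leq_card_setU A B).2. Qed.

Lemma candidates_inv P q x : x \in candidates P q ->
  exists q1 p1 p2 j, [/\ q1 \subset q, q1 != set0, q1 != q,
    p1 \in P q1 & p2 \in P (q :\: q1)] /\ x = Combine j p1 p2.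
Proof.
move=> /flattenP[_ /mapP[q1 q1q ->]] /flattenP[_ /mapP[p1 p1P ->]].
move=> /allpairsP[[p2 j] [/= p2P _ ->]].
move: q1q; rewrite mem_enum inE powersetE => /andP[sq1q /andP[q1_n0 q1_neq]].
by exists q1, p1, p2, j.
Qed.

Lemma mem_candidatesU P A B j p1 p2 :
  [disjoint A & B] -> A != set0 -> B != set0 -> p1 \in P A -> p2 \in P B ->
  Combine j p1 p2 \in candidates P (A :|: B).
Proof.
move=> dAB A_n0 /set0Pn[b bB] p1P p2P.
have AB_A : (A :|: B) :\: A = B.
  by rewrite setDUl setDv set0U; apply/setDidPl; rewrite disjoint_sym.
have A_neq : A != A :|: B.
  by apply/eqP=> AB; move: (disjointFl dAB bB); rewrite AB inE bB orbT.
apply/flattenP; exists (flatten [seq [seq Combine j p1 p2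
    | p2 <- P ((A :|: B) :\: A), j <- enum J] | p1 <- P A]).
  by apply/mapP; exists A; rewrite // mem_enum inE powersetE subsetUl A_n0.
apply/flattenP; exists [seq Combine j p1 p2 | p2 <- P ((A :|: B) :\: A), j <- enum J].
  by apply/mapP; exists p1.
by apply/allpairsP; exists (p2, j); rewrite /= AB_A mem_enum.
Qed.

End Candidates.

Section RTA.
Variables (R : realFieldType) (O T J : finType) (S : eqType).
Variables (scans : T -> seq S) (c : plan T J S -> O -> R).
Variables (Q : {set T}) (alpha : R) (P : {set T} -> seq (plan T J S)).
Hypothesis c_ge0 : forall p o, 0 <= c p o.
Hypothesis pono : PONO c scans.
Hypothesis alpha_ge1 : 1 <= alpha.
Hypothesis rta : RTA_output c scans alpha Q P.

Lemma RTA_inA (q : {set T}) : q \subset Q -> q != set0 -> all (inA scans q) (P q).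
Proof.
have [n] := ubnP #|q|; elim: n q => // n IHn q /ltnSE q_le_n sqQ q_n0.
have [/cards1P[t qt] | q_ge2] : #|q| == 1%N \/ (2 <= #|q|)%N.
  by move: q_n0; rewrite -card_gt0; case: #|q| => [|[|k]]; [|left|right].
  subst q; have [s s_scans ->] := rta.1 t (subsetP sqQ t (set11 t)).
  apply/allP => x /mem_foldl_prune /=; rewrite (perm_mem s_scans).
  by case/mapP=> a a_scans ->; rewrite /inA /= a_scans eqxx.
have [s s_cands ->] := rta.2 q sqQ q_ge2.
apply/allP => x /mem_foldl_prune /=; rewrite (perm_mem s_cands).
case/candidates_inv=> q1 [p1 [p2 [j [[sq1q q1_n0 q1_neq p1P p2P] ->]]]].
have q2_n0 : q :\: q1 != set0.
  by rewrite setD_eq0; apply: contra q1_neq => sqq1; rewrite eqEsubset sq1q.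
have lt_q1 : (#|q1| < #|q|)%N by apply: proper_card; rewrite properEneq q1_neq.
have lt_q2 : (#|q :\: q1| < #|q|)%N by rewrite cardsDS // ltn_subrL !card_gt0 q1_n0 q_n0.
have /allP/(_ _ p1P)/andP[v1 /eqP t1] :=
  IHn q1 (leq_trans lt_q1 q_le_n) (subset_trans sq1q sqQ) q1_n0.
have /allP/(_ _ p2P)/andP[v2 /eqP t2] := IHn (q :\: q1)
  (leq_trans lt_q2 q_le_n) (subset_trans (subsetDl q q1) sqQ) q2_n0.
rewrite /inA /= v1 v2 t1 t2 -{3}(setID q q1) (setIidPr sq1q) eqxx andbT /=.
by rewrite disjoint_sym disjoints_subset subsetDr.
Qed.

Lemma RTA_covers (p : plan T J S) : valid scans p -> tables p \subset Q ->
  covers c (alpha ^+ #|tables p|) (P (tables p)) p.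
Proof.
elim: p => [t a | j pL IHL pR IHR] /= p_valid sqQ.
  have [s s_scans ->] := rta.1 t (subsetP sqQ t (set11 t)).
  rewrite cards1 expr1; apply: covers_foldl_prune_mem => //.
  by rewrite (perm_mem s_scans) map_f.
case/and3P: p_valid => vL vR dLR.
set qL := tables pL in IHL dLR sqQ *; set qR := tables pR in IHR dLR sqQ *.
have [pLs pLsP HL] := IHL vL (subset_trans (subsetUl qL qR) sqQ).
have [pRs pRsP HR] := IHR vR (subset_trans (subsetUr qL qR) sqQ).
have /allP/(_ _ pLsP)/andP[vLs /eqP tLs] :=
  RTA_inA (subset_trans (subsetUl qL qR) sqQ) (tables_neq0 pL).
have /allP/(_ _ pRsP)/andP[vRs /eqP tRs] :=
  RTA_inA (subset_trans (subsetUr qL qR) sqQ) (tables_neq0 pR).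
have qL_gt0 : (0 < #|qL|)%N by rewrite card_gt0 tables_neq0.
have qR_gt0 : (0 < #|qR|)%N by rewrite card_gt0 tables_neq0.
rewrite cards_disjointU //; set m := (#|qL| + #|qR|).-1.
have alpha_m_ge1 : 1 <= alpha ^+ m by apply: exprn_ege1.
have HLm : adom (alpha ^+ m) (c pLs) (c pL).
  by apply: adom_expn_le HL => //; apply: leq_addn_pred.
have HRm : adom (alpha ^+ m) (c pRs) (c pR).
  by apply: adom_expn_le HR => //; rewrite /m addnC leq_addn_pred.
have PONO_m := @pono (alpha ^+ m) j pL pLs pR pRs
  alpha_m_ge1 vL vLs vR vRs dLR tLs tRs HLm HRm.
have q_ge2 : (2 <= #|qL :|: qR|)%N.
  by rewrite cards_disjointU //; exact: leq_add qL_gt0 qR_gt0.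
have [s s_cands ->] := rta.2 _ sqQ q_ge2.
have [p pP Hp] : covers c alpha (foldl (prune c alpha) [::] s) (Combine j pLs pRs).
  apply: covers_foldl_prune_mem => //; rewrite (perm_mem s_cands).
  exact: (@mem_candidatesU _ _ _ P qL qR j pLs pRs dLR (tables_neq0 pL)
    (tables_neq0 pR) pLsP pRsP).
have m_succ : (#|qL| + #|qR| = m.+1)%N by rewrite prednK // addn_gt0 qL_gt0.
exists p => //; rewrite m_succ exprS.
by apply: adom_trans Hp PONO_m; apply: le_trans alpha_ge1.
Qed.

End RTA.

Theorem theorem3 (R : realFieldType) (O T J : finType) (S : eqType)
  (scans : T -> seq S) (c : plan T J S -> O -> R)
  (Q : {set T}) (alpha : R) (P : {set T} -> seq (plan T J S)) :
  (0 < #|O|)%N ->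
  (forall t, scans t != [::]) ->
  (forall t, uniq (scans t)) ->
  (forall p o, 0 <= c p o) ->
  PONO c scans ->
  Q != set0 ->
  1 <= alpha ->
  RTA_output c scans alpha Q P ->
  (forall q : {set T}, q \subset Q -> q != set0 ->
     forall ps, inA scans q ps ->
       exists2 p, p \in P q & adom (alpha ^+ #|q|) (c p) (c ps)) /\
  approx_pareto c scans (alpha ^+ #|Q|) Q (P Q).
Proof.
move=> _ _ _ c_ge0 pono Q_n0 alpha_ge1 rta.
have approx (q : {set T}) : q \subset Q -> forall ps, inA scans q ps ->
    covers c (alpha ^+ #|q|) (P q) ps.
  move=> sqQ ps /andP[v /eqP tq]; rewrite -tq.
  by apply: (RTA_covers c_ge0 pono alpha_ge1 rta); rewrite ?tq.
split; first by move=> q sqQ _; apply: approx.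
by split; [apply: (RTA_inA rta) | apply: approx].
Qed.
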